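(* Let $P$ be a finite nonempty poset. Then: (i) there exists a labeling $\epsilon:E(P)\to\{-1,1\}$ (induced by a bijection $\omega:P\to\{1,\dots,p\}$) such that $P$ is $\epsilon$-consistent if and only if $P$ is parity consistent; (ii) there exists a labeling $\epsilon:E(P)\to\{-1,1\}$ (induced by a bijection $\omega:P\to\{1,\dots,p\}$) such that $P$ is $\epsilon$-graded if and only if $P$ is parity graded. Moreover, the labeling $\epsilon$ can be chosen so that the corresponding rank function has values in $\{0,1\}$.
   Context: Let $p=|P|$. Write $x\prec y$ if $y$ covers $x$ and $E(P)=\{(x,y):x\prec y\}$. A bijection $\omega:P\to\{1,\dots,p\}$ induces $\epsilon:E(P)\to\{-1,1\}$ with $\epsilon(x,y)=1$ if $\omega(x)<\omega(y)$ and $-1$ otherwise. $P$ is $\epsilon$-graded if $\sum_{i=1}^n\epsilon(x_{i-1},x_i)$ is the same for every maximal chain $x_0\prec\cdots\prec x_n$ of $P$. $P$ is $\epsilon$-consistent if for every $y\in P$ the principal order ideal $\Lambda_y=\{x\in P:x\le y\}$ is $\epsilon_y$-graded, where $\epsilon_y$ is the restriction of $\epsilon$ to $E(\Lambda_y)$; the rank function is then $\rho(y)=$ the common value of these sums for $\Lambda_y$ (i.e. the $\epsilon$-weight of any saturated chain from a minimal element to $y$). A poset is parity graded if all maximal chains have sizes of the same parity, and parity consistent if every principal order ideal $\Lambda_x$ is parity graded. *)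

From HB Require Import structures.
From mathcomp Require Import all_boot all_order all_algebra.
Set Implicit Arguments. Unset Strict Implicit. Unset Printing Implicit Defensive.
Import Order.TTheory GRing.Theory Num.Theory.

(* Finite poset P = T : finPOrderType d. A labeling omega : P -> {1..p} is
   modelled as a bijection w : T -> 'I_#|T| (values 0..p-1; only the relative
   order of labels matters for epsilon). *)

Section PosetDefs.
Context {d : Order.disp_t} {T : finPOrderType d}.
Implicit Types (S : {pred T}) (x y z : T).

Definition coversin S x y :=
  [&& x \in S, y \in S, (x < y)%O &
      [forall z, ~~ [&& z \in S, (x < z)%O & (z < y)%O]]].

Definition minimalin S x := (x \in S) && [forall z, (z \in S) ==> ~~ (z < x)%O].
Definition maximalin S x := (x \in S) && [forall z, (z \in S) ==> ~~ (x < z)%O].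

Definition maxchain S (c : seq T) :=
  match c with
  | [::] => false
  | x0 :: s => [&& minimalin S x0, path (coversin S) x0 s & maximalin S (last x0 s)]
  end.

Definition eps (w : T -> 'I_#|T|) x y : int :=
  if (w x < w y)%N then 1%R else (-1)%R.

Fixpoint cweight (w : T -> 'I_#|T|) x (s : seq T) : int :=
  match s with
  | [::] => 0%R
  | y :: s' => (eps w x y + cweight w y s')%R
  end.

Definition chain_weight (w : T -> 'I_#|T|) (c : seq T) : int :=
  match c with [::] => 0%R | x :: s => cweight w x s end.

Definition eps_graded_on (w : T -> 'I_#|T|) S :=
  forall c c', maxchain S c -> maxchain S c' -> chain_weight w c = chain_weight w c'.

Definition ideal y : {pred T} := [pred x | (x <= y)%O].

Definition eps_graded (w : T -> 'I_#|T|) := eps_graded_on w predT.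
Definition eps_consistent (w : T -> 'I_#|T|) := forall y, eps_graded_on w (ideal y).

Definition parity_graded_on S :=
  forall c c', maxchain S c -> maxchain S c' -> odd (size c) = odd (size c').

End PosetDefs.

Definition parity_graded {d : Order.disp_t} (T : finPOrderType d) :=
  parity_graded_on (predT : {pred T}).
Definition parity_consistent {d : Order.disp_t} (T : finPOrderType d) :=
  forall y : T, parity_graded_on (ideal y).

From HB Require Import structures.
From mathcomp Require Import all_boot all_order all_algebra zify.
Set Implicit Arguments. Unset Strict Implicit. Unset Printing Implicit Defensive.
Import Order.Theory GRing.Theory.

(* Along a chain of length n the epsilon-weight is n minus twice the number of
   descents, so epsilon-gradedness (resp. consistency) forces parity
   gradedness (resp. consistency).  Conversely, if P is parity consistent, the
   parity r(y) in {0,1} of the saturated chains from a minimal element to y is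
   well defined and flips along every cover.  Labeling all elements with r = 0
   before all elements with r = 1 gives epsilon(x,y) = r(y) - r(x) on covers,
   so chain weights telescope to r of the top element.  Parity gradedness
   implies parity consistency: two saturated chains ending at y extend by a
   common chain to maximal chains of P. *)

Lemma exists_separating_bijection (T : finType) (P : pred T) :
  exists2 w : T -> 'I_#|T|, bijective w & forall a b, ~~ P a -> P b -> w a < w b.
Proof.
pose s := [seq x <- enum T | ~~ P x] ++ [seq x <- enum T | P x].
have s_enum : perm_eq s (enum T) by rewrite perm_catC perm_filterC.
have s_mem x : x \in s by rewrite (perm_mem s_enum) mem_enum.
have index_lt x : index x s < #|T| by rewrite cardE -(perm_size s_enum) index_mem.
exists (fun x => Ordinal (index_lt x)).
  apply: inj_card_bij; last by rewrite card_ord.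
  move=> x y /(congr1 val) /= eq_index.
  by rewrite -(nth_index x (s_mem x)) eq_index nth_index.
move=> a b Pa Pb /=; rewrite !index_cat mem_filter Pa mem_enum mem_filter Pb /=.
by rewrite (leq_trans _ (leq_addr _ _)) // index_mem mem_filter Pa mem_enum.
Qed.

Lemma exists_minimal_le {d : Order.disp_t} {T : finPOrderType d} (y : T) :
  exists2 x, minimalin predT x & (x <= y)%O.
Proof.
case: (@arg_minnP _ y (fun x => (x <= y)%O) (fun x => #|[pred t | (t < x)%O]|))
  => [|x xy x_min]; first exact: lexx. exists x => //; apply/andP; split=> //.
apply/forallP => z; apply/implyP => _; apply/negP => zx.
have := x_min z (le_trans (ltW zx) xy); rewrite leqNgt => /negP; apply.
apply/proper_card/properP; split; last by exists z; rewrite !inE ?zx ?ltxx.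
by apply/subsetP => t; rewrite !inE => tz; apply: lt_trans tz zx.
Qed.

Lemma exists_maximal_ge {d : Order.disp_t} {T : finPOrderType d} (y : T) :
  exists2 x, maximalin predT x & (y <= x)%O.
Proof. by have [x x_max y_le] := @exists_minimal_le _ T^d y; exists x. Qed.

Section Chains.
Context {d : Order.disp_t} {T : finPOrderType d}.
Implicit Types (a b x y z : T) (s t : seq T).
Local Open Scope order_scope.

Local Notation cover := (coversin (predT : {pred T})).

Lemma coverP a b : reflect (a < b /\ forall z, a < z -> ~~ (z < b)) (cover a b).
Proof.
apply: (iffP and4P) => [[_ _ ab /forallP between]|[ab between]].
  by split=> // z az; move: (between z); rewrite az.
split=> //; apply/forallP => z; apply/negP => /and3P[_ az zb].
by move: (between z az); rewrite zb.
Qed.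

Lemma card_between_lt a b a' b' z : a <= a' -> b' <= b -> a < z < b ->
  ~~ (a' < z < b') -> #|[pred t | a' < t < b']| < #|[pred t | a < t < b]|.
Proof.
move=> aa' b'b zab z_out; apply/proper_card/properP; split; last by exists z.
apply/subsetP => t /andP[a't tb'].
by rewrite inE (le_lt_trans aa' a't) (lt_le_trans tb' b'b).
Qed.

Lemma lt_cover_path x y : x < y -> exists2 s, path cover x s & last x s = y.
Proof.
have [n] := ubnP #|[pred t | x < t < y]|; elim: n x y => // n IH x y.
rewrite ltnS => size_xy xy.
case: (pickP [pred t | x < t < y]) => [z /[dup] xzy /andP[xz zy] | no_between].
  have z_out_xz : ~~ (x < z < z) by rewrite ltxx andbF.
  have z_out_zy : ~~ (z < z < y) by rewrite ltxx.
  have [s1 p1 l1] := IH x z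
    (leq_trans (card_between_lt (lexx x) (ltW zy) xzy z_out_xz) size_xy) xz.
  have [s2 p2 l2] := IH z y
    (leq_trans (card_between_lt (ltW xz) (lexx y) xzy z_out_zy) size_xy) zy.
  by exists (s1 ++ s2); rewrite ?cat_path ?last_cat l1 ?p1.
exists [:: y] => //=; rewrite andbT; apply/coverP; split=> // z xz.
by apply/negP => zy; move: (no_between z); rewrite /= xz zy.
Qed.

Lemma cover_path_from_minimal y :
  exists x s, [/\ minimalin predT x, path cover x s & last x s = y].
Proof.
have [x x_min] := exists_minimal_le y.
rewrite le_eqVlt => /predU1P[<- | /lt_cover_path[s p l]]; first by exists x, [::].
by exists x, s.
Qed.

Lemma cover_path_to_maximal y :
  exists2 t, path cover y t & maximalin predT (last y t).
Proof.
have [x x_max] := exists_maximal_ge y.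
rewrite le_eqVlt => /predU1P[-> | /lt_cover_path[t p l]]; first by exists [::].
by exists t => //; rewrite l.
Qed.

Lemma cover_path_le_last x s :
  path cover x s -> {in x :: s, forall z, z <= last x s}.
Proof.
elim: s x => [|a s IH] x /=; first by move=> _ z /[1!inE] /eqP ->.
case/andP => /coverP[xa _] /IH a_le z; rewrite inE => /predU1P[-> | /a_le //].
exact: le_trans (ltW xa) (a_le a (mem_head _ _)).
Qed.

Lemma coversin_ideal y a b : coversin (ideal y) a b = cover a b && (b <= y).
Proof.
rewrite /coversin !inE /=; case: (boolP (b <= y)) => [b_le|_]; last by rewrite !andbF.
case: (boolP (a < b)) => [ab|_]; last by rewrite !andbF.
rewrite (le_trans (ltW ab) b_le) andbT /=; apply/eq_forallb => z; rewrite inE.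
by case: (boolP (z < b)) => [zb|_]; rewrite ?andbF ?(le_trans (ltW zb) b_le).
Qed.

Lemma maxchain_idealP y x s : maxchain (ideal y) (x :: s) <->
  [/\ minimalin predT x, path cover x s & last x s = y].
Proof.
split.
  case/and3P => /andP[xy /forallP x_min] p /andP[ly /forallP l_max].
  move: xy ly; rewrite !inE => xy ly; split.
  - apply/andP; split=> //; apply/forallP => z; apply/implyP => _.
    by apply/negP => zx; move: (x_min z); rewrite inE (le_trans (ltW zx) xy) zx.
  - by apply: sub_path p => a b; rewrite coversin_ideal => /andP[].
  - move: (l_max y); rewrite inE lexx /=.
    by move: ly; rewrite le_eqVlt => /predU1P[// | ->].
case=> /andP[_ /forallP x_min] p <-; have le_last := cover_path_le_last p.
rewrite /= (@eq_in_path _ (ideal (last x s)) _ cover); last 2 first.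
- by move=> a b _ /[1!inE] bL; rewrite coversin_ideal bL andbT.
- by apply/allP => z /le_last.
rewrite p /minimalin /maximalin !inE le_last ?mem_head // lexx /=.
apply/andP; split; apply/forallP => z; apply/implyP; first by move: (x_min z).
by rewrite inE => /le_gtF ->.
Qed.

Lemma maxchain_ideal_exists y : exists c, maxchain (ideal y) c.
Proof.
have [x [s [x_min p l]]] := cover_path_from_minimal y.
by exists (x :: s); apply/maxchain_idealP.
Qed.

Lemma maxchain_ideal_last x s :
  maxchain predT (x :: s) -> maxchain (ideal (last x s)) (x :: s).
Proof. by case/and3P => x_min p _; apply/maxchain_idealP. Qed.

Lemma parity_graded_consistent : parity_graded T -> parity_consistent T.
Proof.
move=> PG y [|x s] [|x' s'] //.
move=> /maxchain_idealP[x_min p l] /maxchain_idealP[x'_min p' l'].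
have [t pt t_max] := cover_path_to_maximal y.
have extend u v : minimalin predT u -> path cover u v -> last u v = y ->
    maxchain predT (u :: v ++ t).
  by move=> u_min pv lv; rewrite /= u_min cat_path pv last_cat lv pt t_max.
have := PG _ _ (extend _ _ x_min p l) (extend _ _ x'_min p' l').
by rewrite /= !size_cat !oddD => /negb_inj /addIb ->.
Qed.

Lemma cweight_mod2 (w : T -> 'I_#|T|) x s :
  (cweight w x s = (size s)%:Z %[mod 2])%Z.
Proof.
by elim: s x => [|a s IH] x //=; have := IH a; rewrite /eps; case: ifP; lia.
Qed.

Lemma eps_graded_on_parity (w : T -> 'I_#|T|) (S : {pred T}) :
  eps_graded_on w S -> parity_graded_on S.
Proof.
move=> w_graded [|x s] [|x' s'] // c c'; have := w_graded _ _ c c'; rewrite /=.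
have := cweight_mod2 w x s; have := cweight_mod2 w x' s' => mod_s' mod_s eq_w.
congr negb; have : (size s %% 2 = size s' %% 2)%N by lia.
by rewrite !modn2 => /(congr1 odd); rewrite !oddb.
Qed.

Section RankLabeling.
Variables (r : pred T) (w : T -> 'I_#|T|).
Hypothesis w_separates : forall a b, ~~ r a -> r b -> (w a < w b)%N.
Hypothesis r_cover : forall a b, cover a b -> r b = ~~ r a.
Hypothesis r_minimal : forall x, minimalin predT x -> r x = false.
Local Open Scope ring_scope.

Lemma eps_cover a b : cover a b -> eps w a b = (r b)%:Z - (r a)%:Z.
Proof.
move=> ab; have rb := r_cover ab; rewrite /eps rb.
have [ra | ra] := boolP (r a); rewrite ra /= in rb; last by rewrite w_separates.
by rewrite ltnNge ltnW // w_separates ?rb.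
Qed.

Lemma cweight_cover_path x s :
  path cover x s -> cweight w x s = (r (last x s))%:Z - (r x)%:Z.
Proof.
elim: s x => [|a s IH] x /=; first by rewrite subrr.
by case/andP => xa /IH ->; rewrite (eps_cover xa) addrC addrA subrK.
Qed.

Lemma chain_weight_ideal y c : maxchain (ideal y) c -> chain_weight w c = (r y)%:Z.
Proof.
case: c => [|x s] // /maxchain_idealP[x_min p <-].
by rewrite /= cweight_cover_path // (r_minimal x_min) subr0.
Qed.

End RankLabeling.

Section ParityConsistent.
Hypothesis PC : parity_consistent T.
Local Open Scope ring_scope.

Definition parity_rank y := ~~ odd (size (xchoose (maxchain_ideal_exists y))).

Lemma parity_rankE y c : maxchain (ideal y) c -> parity_rank y = ~~ odd (size c).
Proof. by move=> c_max; rewrite /parity_rank (PC (xchooseP _) c_max). Qed.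

Lemma parity_rank_cover a b : cover a b -> parity_rank b = ~~ parity_rank a.
Proof.
move=> ab; have [[|x s] //] := maxchain_ideal_exists a.
move=> /[dup] a_max /maxchain_idealP[x_min p l].
have b_max : maxchain (ideal b) (x :: rcons s b).
  by apply/maxchain_idealP; rewrite rcons_path p l ab last_rcons.
by rewrite (parity_rankE a_max) (parity_rankE b_max) /= size_rcons /= negbK.
Qed.

Lemma parity_rank_minimal x : minimalin predT x -> parity_rank x = false.
Proof.
by move=> x_min; rewrite (@parity_rankE x [:: x]) //; apply/maxchain_idealP.
Qed.

Lemma exists_parity_labeling : exists2 w : T -> 'I_#|T|, bijective w &
  forall y c, maxchain (ideal y) c -> chain_weight w c = (~~ odd (size c))%:Z.
Proof.
have [w w_bij w_separates] := exists_separating_bijection parity_rank.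
exists w => // y c c_max; rewrite -(parity_rankE c_max).
exact: chain_weight_ideal w_separates parity_rank_cover parity_rank_minimal _ _ c_max.
Qed.

End ParityConsistent.

Lemma parity_consistent_eps_consistent : parity_consistent T ->
  exists w : T -> 'I_#|T|, [/\ bijective w, eps_consistent w &
    forall y c, maxchain (ideal y) c -> chain_weight w c \in [:: 0%R; 1%R]].
Proof.
move=> PC; have [w w_bij w_weight] := exists_parity_labeling PC.
exists w; split=> // [y c c' c_max c'_max | y c c_max].
  by rewrite (w_weight _ _ c_max) (w_weight _ _ c'_max) (PC _ _ _ c_max c'_max).
by rewrite (w_weight _ _ c_max); case: odd.
Qed.

Lemma parity_graded_eps_graded : parity_graded T ->
  exists w : T -> 'I_#|T|, [/\ bijective w, eps_graded w &
    forall c, maxchain predT c -> chain_weight w c \in [:: 0%R; 1%R]].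
Proof.
move=> /[dup] PG /parity_graded_consistent /exists_parity_labeling[w w_bij w_weight].
have top_weight x s : maxchain predT (x :: s) ->
    chain_weight w (x :: s) = (~~ odd (size (x :: s)))%:Z%R.
  by move/maxchain_ideal_last/w_weight.
exists w; split=> // [[|x s] [|x' s'] // c_max c'_max | [|x s] // c_max].
  by rewrite !top_weight // (PG _ _ c_max c'_max).
by rewrite top_weight //; case: odd.
Qed.

End Chains.

Theorem theorem2p5 (d : Order.disp_t) (T : finPOrderType d) (HT : (0 < #|T|)%N) :
  ((exists w : T -> 'I_#|T|, bijective w /\ eps_consistent w) <-> parity_consistent T)
  /\ ((exists w : T -> 'I_#|T|, bijective w /\ eps_graded w) <-> parity_graded T)
  /\ (parity_consistent T ->
      exists w : T -> 'I_#|T|, [/\ bijective w, eps_consistent w &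
        forall (y : T) (c : seq T), maxchain (ideal y) c ->
          chain_weight w c \in [:: 0%R; 1%R]])
  /\ (parity_graded T ->
      exists w : T -> 'I_#|T|, [/\ bijective w, eps_graded w &
        forall c : seq T, maxchain (predT : {pred T}) c ->
          chain_weight w c \in [:: 0%R; 1%R]]).
Proof.
split; [|split; [|split]].
- split=> [[w [_ w_consistent]] y | /parity_consistent_eps_consistent[w []]].
    exact: eps_graded_on_parity (w_consistent y).
  by exists w.
- split=> [[w [_ w_graded]] | /parity_graded_eps_graded[w []]].
    exact: eps_graded_on_parity w_graded.
  by exists w.
- exact: parity_consistent_eps_consistent.
- exact: parity_graded_eps_graded.
Qed.
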